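(* For every integer $k\ge 2$, let $T(k,2)$ be the complete $k$-ary tree of height 2 (a root $x$ with children $x_1,\dots,x_k$, each $x_i$ having exactly $k$ children $x_{i1},\dots,x_{ik}$, which are leaves). Then $\tau(T(k,2))=k$ and $\beta_p(T(k,2))=k+1$.
   Context: Two vertices $u,v$ are twins if $N(u)\setminus\{v\}=N(v)\setminus\{u\}$; the twin number $\tau(G)$ is the maximum cardinality of an equivalence class of the twin relation. For a partition $\Pi=\{S_1,\dots,S_m\}$ of $V(G)$, $r(u|\Pi)=(d(u,S_1),\dots,d(u,S_m))$ with $d(u,S)=\min_{w\in S}d(u,w)$; $\Pi$ is locating if $r(u|\Pi)\ne r(v|\Pi)$ for all distinct $u,v$; $\beta_p(G)$ is the minimum size of a locating partition. *)

From mathcomp Require Import all_boot.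
Set Implicit Arguments. Unset Strict Implicit. Unset Printing Implicit Defensive.

Section Graphs.
Variable T : finType.
Variable e : rel T.

Definition nbhd (u : T) : {set T} := [set w | e u w].

Definition twins (u v : T) : bool := (nbhd u :\ v) == (nbhd v :\ u).

Definition twin_class (u : T) : {set T} := [set v | twins u v].

Definition twin_number : nat := \max_(u : T) #|twin_class u|.

Definition ball (u : T) (n : nat) : {set T} :=
  iter n (fun A => A :|: [set y | [exists x in A, e x y]]) [set u].

(* graph distance: least n with v in ball u n (all graphs considered are
   connected, so this is attained below #|T|) *)
Definition dist (u v : T) : nat :=
  find (fun n => v \in ball u n) (iota 0 #|T|).

Definition dist_set (u : T) (S : {set T}) : nat :=
  \big[minn/#|T|]_(w in S) dist u w.

Definition locating (P : {set {set T}}) : bool :=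
  partition P [set: T] &&
  [forall u, forall v, (u != v) ==>
     [exists S in P, dist_set u S != dist_set v S]].

Definition partition_dim : nat :=
  \big[minn/#|{set T}|]_(P : {set {set T}} | locating P) #|P|.

End Graphs.

(* Complete k-ary tree of height 2: vertices
   None = root x, Some (i, None) = x_i, Some (i, Some j) = x_ij. *)
Definition tk2_adj (k : nat) (a b : option ('I_k * option 'I_k)) : bool :=
  match a, b with
  | None, Some (_, None) => true
  | Some (_, None), None => true
  | Some (i, None), Some (j, Some _) => i == j
  | Some (i, Some _), Some (j, None) => i == j
  | _, _ => false
  end.

From mathcomp Require Import all_boot zify.
Set Implicit Arguments. Unset Strict Implicit. Unset Printing Implicit Defensive.

(* Distances in T(k,2) are explicit and at most 4, so everything reduces to
   case analysis on the three kinds of vertices.  The twin classes are the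
   sets of sibling leaves, hence tau = k.  Colouring the root by itself, x_i by
   i and x_ij by j gives a locating partition with k + 1 blocks.  Conversely,
   sibling leaves are twins, so a locating partition puts them in pairwise
   distinct blocks; with at most k blocks every block then contains a leaf of
   every branch.  This forces the x_i into distinct blocks, hence the root into
   the block of some x_i, and the root and x_i are both at distance 1 from
   every other block, a contradiction. *)

Lemma bigmin_leq (I : eqType) (r : seq I) (P : pred I) {F : I -> nat} {x0 : nat} i :
  i \in r -> P i -> \big[minn/x0]_(j <- r | P j) F j <= F i.
Proof.
elim: r => // a r IH; rewrite inE big_cons => /orP [/eqP <- ->|/IH + Pi].
  exact: geq_minl.
by move=> /(_ Pi) le_i; case: ifP => // _; exact: leq_trans (geq_minr _ _) le_i.
Qed.

Lemma find_iota_threshold (P : pred nat) m N :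
  m < N -> (forall n, P n = (m <= n)) -> find P (iota 0 N) = m.
Proof.
move=> ltmN Pn; rewrite -(subnKC (ltnW ltmN)) iotaD find_cat.
have -> : has P (iota 0 m) = false.
  by apply/hasP => -[n]; rewrite mem_iota add0n Pn => /andP [_]; rewrite ltnNge => /negP.
rewrite size_iota add0n; have : 0 < N - m by rewrite subn_gt0.
by case: (N - m) => [|r] //= _; rewrite Pn leqnn addn0.
Qed.

Lemma ord_inj_onto (T : finType) k (A : {set T}) (f : 'I_k -> T) :
  injective f -> (forall j, f j \in A) -> #|A| <= k ->
  forall x, x \in A -> exists j, x = f j.
Proof.
move=> f_inj fA cardA x xA.
have /eqP defA : [set f j | j : 'I_k] == A.
  rewrite eqEcard card_imset // card_ord cardA andbT.
  by apply/subsetP => _ /imsetP [j _ ->].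
by move: xA; rewrite -defA => /imsetP [j _ ->]; exists j.
Qed.

Lemma eq_SomeE (T : eqType) (a b : T) : (Some a == Some b) = (a == b).
Proof. by []. Qed.

Lemma eq_NoneSomeE (T : eqType) (b : T) : (None == Some b) = false.
Proof. by []. Qed.

Lemma eq_SomeNoneE (T : eqType) (b : T) : (Some b == None) = false.
Proof. by []. Qed.

Section GraphDistance.
Variables (T : finType) (e : rel T).

Section DistanceCertificate.
Variable D : T -> T -> nat.
Hypothesis D_eq0 : forall u v, (D u v == 0) = (u == v).
Hypothesis D_edge : forall u x v, e x v -> D u v <= (D u x).+1.
Hypothesis D_pred : forall u v n, D u v = n.+1 -> exists2 x, e x v & D u x = n.
Hypothesis D_lt_card : forall u v, D u v < #|T|.

Lemma ball_certE u n : ball e u n = [set v | D u v <= n].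
Proof.
elim: n => [|n IH].
  by apply/setP => v; rewrite /ball !inE leqn0 D_eq0 eq_sym.
rewrite /ball iterS -/(ball e u n) IH; apply/setP => v; rewrite !inE.
apply/idP/idP.
  case/orP => [/leqW //|/existsP [x /andP []]]; rewrite inE => le_x xv.
  exact: leq_trans (D_edge u xv) _.
rewrite leq_eqVlt ltnS; case/orP => [/eqP/D_pred [x xv Dx]|-> //].
by apply/orP; right; apply/existsP; exists x; rewrite inE Dx leqnn xv.
Qed.

Lemma dist_certE u v : dist e u v = D u v.
Proof. by apply: find_iota_threshold => // n; rewrite ball_certE inE. Qed.

End DistanceCertificate.

Lemma dist_refl u : dist e u u = 0.
Proof.
rewrite /dist; have : 0 < #|T| by apply/card_gt0P; exists u.
by case: #|T| => //= n _; rewrite /ball /= inE eqxx.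
Qed.

Lemma dist_set_le u (S : {set T}) w : w \in S -> dist_set e u S <= dist e u w.
Proof. exact: bigmin_leq (mem_index_enum w). Qed.

Lemma dist_set_eq u (S : {set T}) n : n <= #|T| ->
  (exists2 w, w \in S & dist e u w <= n) ->
  (forall w, w \in S -> n <= dist e u w) -> dist_set e u S = n.
Proof.
move=> le_nT [w wS le_wn] lb; apply/eqP; rewrite eqn_leq.
rewrite (leq_trans (dist_set_le u wS) le_wn) /=.
apply: (big_ind (fun x => n <= x)) => // x y le_nx le_ny.
by rewrite leq_min le_nx le_ny.
Qed.

Lemma dist_set_mem u (S : {set T}) : u \in S -> dist_set e u S = 0.
Proof. by move=> uS; apply/eqP; rewrite -leqn0 -(dist_refl u) dist_set_le. Qed.

Lemma eq_dist_set u v (S : {set T}) :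
  (forall w, w \in S -> dist e u w = dist e v w) -> dist_set e u S = dist_set e v S.
Proof. exact: eq_bigr. Qed.

Lemma twin_number_eq n : (forall u, #|twin_class e u| <= n) ->
  (exists u, n <= #|twin_class e u|) -> twin_number e = n.
Proof.
move=> ub [u lb]; apply/eqP; rewrite eqn_leq (leq_trans lb (leq_bigmax u)) andbT.
by apply/bigmax_leqP => v _; exact: ub.
Qed.

Lemma partition_dim_eq P0 : locating e P0 ->
  (forall P, locating e P -> #|P0| <= #|P|) -> partition_dim e = #|P0|.
Proof.
move=> locP0 lb; apply/eqP; rewrite eqn_leq (bigmin_leq (mem_index_enum P0)) //=.
apply: (big_ind (fun x => #|P0| <= x)) => [|x y le_x le_y|P /lb //].
  exact: max_card.
by rewrite leq_min le_x le_y.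
Qed.

Section LocatingPartition.
Variable P : {set {set T}}.
Hypothesis locP : locating e P.

Lemma locating_partition : partition P [set: T].
Proof. by case/andP: locP. Qed.

Lemma pblock_locating u : pblock P u \in P.
Proof. by case/and3P: locating_partition => /eqP covP _ _; rewrite pblock_mem ?covP. Qed.

Lemma mem_pblock_locating u : u \in pblock P u.
Proof. by case/and3P: locating_partition => /eqP covP _ _; rewrite mem_pblock covP. Qed.

Lemma pblock_locating_eq S u : S \in P -> u \in S -> pblock P u = S.
Proof. by case/and3P: locating_partition => _ trivP _; exact: def_pblock. Qed.

Lemma notin_pblock_locating u S w :
  S \in P -> S != pblock P u -> w \in pblock P u -> w \notin S.
Proof.
move=> SP neS wu; apply: contra neS => wS.
by rewrite -(pblock_locating_eq SP wS) (pblock_locating_eq (pblock_locating u) wu).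
Qed.

Lemma locating_pblock_neq u v : u != v ->
  (forall S, S \in P -> S != pblock P u -> dist_set e u S = dist_set e v S) ->
  pblock P u != pblock P v.
Proof.
move=> uv same; apply/eqP => uvB.
move: locP => /andP [_ /forallP/(_ u)/forallP/(_ v)]; rewrite uv /=.
case/existsP => S /andP [SP]; have [->|neS] := eqVneq S (pblock P u).
  rewrite dist_set_mem ?mem_pblock_locating // uvB.
  by rewrite dist_set_mem ?mem_pblock_locating.
by rewrite same // eqxx.
Qed.

End LocatingPartition.
End GraphDistance.

Section CompleteTree.
Variable k : nat.
Local Notation V := (option ('I_k * option 'I_k)).
Local Notation e := (@tk2_adj k).
Local Notation mid i := (Some (i, None)).
Local Notation leaf i j := (Some (i, Some j)).

Definition tdist (u v : V) : nat :=
  match u, v with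
  | None, None => 0
  | None, mid _ | mid _, None => 1
  | None, leaf _ _ | leaf _ _, None => 2
  | mid i, mid i' => if i == i' then 0 else 2
  | mid i, leaf i' _ | leaf i _, mid i' => if i == i' then 1 else 3
  | leaf i j, leaf i' j' => if i == i' then (if j == j' then 0 else 2) else 4
  end.

(* The neighbour of [v] on a shortest path from [u]; irrelevant when [v = u]. *)
Definition step_back (u v : V) : V :=
  match v, u with
  | None, mid i | None, leaf i _ => mid i
  | mid i, leaf i' _ => if i' == i then u else None
  | leaf i _, _ => mid i
  | _, _ => None
  end.

Ltac tree_cases := repeat (first [ solve [congruence]
  | progress rewrite ?eq_SomeE ?xpair_eqE ?eq_NoneSomeE ?eq_SomeNoneE
  | case: (@eqP 'I_k) => //= ?; subst | case: eqP => //= ?; subst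
  | done | move=> /= ]).

Lemma tdist_eq0 u v : (tdist u v == 0) = (u == v).
Proof. by case: u => [[i [j|]]|]; case: v => [[i' [j'|]]|] //=; tree_cases. Qed.

Lemma tdist_le4 u v : tdist u v <= 4.
Proof. by case: u => [[i [j|]]|]; case: v => [[i' [j'|]]|] //=; tree_cases. Qed.

Lemma tdist_edge u x v : e x v -> tdist u v <= (tdist u x).+1.
Proof.
by case: u => [[i [j|]]|]; case: x => [[a [b|]]|]; case: v => [[i' [j'|]]|] //=;
  tree_cases.
Qed.

Lemma tdist_pred u v n : tdist u v = n.+1 -> exists2 x, e x v & tdist u x = n.
Proof.
suff : tdist u v = n.+1 -> e (step_back u v) v /\ tdist u (step_back u v) = n.
  by move=> /[apply] -[]; exists (step_back u v).
by case: u => [[i [j|]]|]; case: v => [[i' [j'|]]|] //=; tree_cases; case=> <-.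
Qed.

Lemma not_twins u v w :
  (w \in nbhd e u :\ v) != (w \in nbhd e v :\ u) -> ~~ twins e u v.
Proof. by apply: contra => /eqP ->. Qed.

Lemma sibling_leaves_twins i j j' : twins e (leaf i j) (leaf i j').
Proof. by apply/eqP/setP => w; rewrite !inE; case: w => [[a [b|]]|] //=; tree_cases. Qed.

Definition siblings (u : V) : {set V} :=
  if u is leaf i _ then [set leaf i j | j : 'I_k] else [set u].

Section AtLeastTwoBranches.
Hypothesis hk : 2 <= k.

Lemma card_siblings u : #|siblings u| <= k.
Proof.
case: u => [[i [j|]]|] /=; rewrite ?cards1 ?(ltnW hk) //.
by apply: leq_trans (leq_imset_card _ _) _; rewrite card_ord.
Qed.

Lemma exists_other (i : 'I_k) : exists i', i' != i.
Proof.
have k_gt0 : 0 < k by exact: ltnW hk.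
have [->|ne] := eqVneq i (Ordinal k_gt0); first by exists (Ordinal hk).
by exists (Ordinal k_gt0); rewrite eq_sym.
Qed.

Lemma twin_class_sub u : twin_class e u \subset siblings u.
Proof.
(* In each case some vertex lies in exactly one of N(u) \ {v}, N(v) \ {u}. *)
apply/subsetP => v; rewrite inE; apply: contraLR.
case: u => [[i [j|]]|]; case: v => [[i' [j'|]]|] //=.
- case: (i' =P i) => [->|ne] notS; first by case/negP: notS; apply: imset_f.
  by apply: (@not_twins _ _ (mid i)); rewrite !inE /=; tree_cases.
- case: (i' =P i) => [->|ne] _; first by apply: (@not_twins _ _ None); rewrite !inE.
  by apply: (@not_twins _ _ (mid i)); rewrite !inE /=; tree_cases.
- have [i2 ne] := exists_other i.
  by move=> _; apply: (@not_twins _ _ (mid i2)); rewrite !inE /=; move: ne; tree_cases.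
- by move=> _; apply: (@not_twins _ _ None); rewrite !inE.
- rewrite inE => ne; apply: (@not_twins _ _ (leaf i (Ordinal (ltnW hk)))).
  by rewrite !inE /=; move: ne; tree_cases.
- have [i2 ne] := exists_other i.
  by move=> _; apply: (@not_twins _ _ (mid i2)); rewrite !inE /=; move: ne; tree_cases.
- have [i2 ne] := exists_other i'.
  by move=> _; apply: (@not_twins _ _ (mid i2)); rewrite !inE /=; move: ne; tree_cases.
- have [i2 ne] := exists_other i'.
  by move=> _; apply: (@not_twins _ _ (mid i2)); rewrite !inE /=; move: ne; tree_cases.
- by rewrite inE eqxx.
Qed.

Lemma twin_class_leaf i j : twin_class e (leaf i j) = siblings (leaf i j).
Proof.
apply/eqP; rewrite eqEsubset twin_class_sub.
by apply/subsetP => _ /imsetP [j' _ ->]; rewrite inE sibling_leaves_twins.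
Qed.

Lemma card_siblings_leaf i j : #|siblings (leaf i j)| = k.
Proof. by rewrite card_imset ?card_ord // => j1 j2 []. Qed.

Lemma four_lt_card : 4 < #|{: V}|.
Proof. rewrite card_option card_prod card_ord card_option card_ord; nia. Qed.

Lemma distE u v : dist e u v = tdist u v.
Proof.
apply: dist_certE tdist_eq0 tdist_edge tdist_pred _ u v => u' v'.
exact: leq_ltn_trans (tdist_le4 u' v') four_lt_card.
Qed.

Lemma tree_dist_setE u (S : {set V}) n : n <= 4 ->
  (exists2 w, w \in S & tdist u w <= n) -> (forall w, w \in S -> n <= tdist u w) ->
  dist_set e u S = n.
Proof.
move=> le_n4 [w wS le_wn] lb; apply: dist_set_eq.
- exact: leq_trans le_n4 (ltnW four_lt_card).
- by exists w; rewrite ?distE.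
- by move=> v /lb; rewrite distE.
Qed.

Lemma tree_dist_set_one u w (S : {set V}) :
  u \notin S -> w \in S -> tdist u w = 1 -> dist_set e u S = 1.
Proof.
move=> uS wS uw; apply: tree_dist_setE => //; first by exists w; rewrite ?uw.
by move=> v vS; rewrite lt0n tdist_eq0; apply: contraNneq uS => ->.
Qed.

Definition colour (v : V) : option 'I_k :=
  match v with None => None | mid i => Some i | leaf _ j => Some j end.

Definition colour_class (c : option 'I_k) : {set V} := [set v | colour v == c].

Definition colouring : {set {set V}} := [set colour_class c | c : option 'I_k].

Definition colour_rep (c : option 'I_k) : V := if c is Some i then mid i else None.

Lemma colour_rep_in c : colour_rep c \in colour_class c.
Proof. by rewrite inE; case: c. Qed.

Lemma colour_class_inj : injective colour_class.
Proof.
move=> c c' same; have := colour_rep_in c.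
by rewrite same inE; case: c {same} => [i|] /eqP.
Qed.

Lemma card_colouring : #|colouring| = k.+1.
Proof. by rewrite card_imset ?card_option ?card_ord //; exact: colour_class_inj. Qed.

Lemma colouring_partition : partition colouring [set: V].
Proof.
apply/and3P; split.
- apply/eqP/setP => v; rewrite inE; apply/bigcupP; exists (colour_class (colour v)).
    exact: imset_f.
  by rewrite inE.
- apply/trivIsetP => _ _ /imsetP [c _ ->] /imsetP [c' _ ->] ne.
  rewrite -setI_eq0; apply/eqP/setP => v; rewrite !inE.
  by apply/negP => /andP [/eqP vc /eqP vc']; move: ne; rewrite -vc -vc' eqxx.
- apply/negP => /imsetP [c _ c0].
  by have := colour_rep_in c; rewrite -c0 inE.
Qed.

Definition colour_dist (u : V) (c : option 'I_k) : nat :=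
  match u, c with
  | None, None => 0
  | None, Some _ => 1
  | mid _, None => 1
  | mid i, Some m => if m == i then 0 else 1
  | leaf _ _, None => 2
  | leaf i j, Some m => if m == j then 0 else if m == i then 1 else 2
  end.

Definition nearest_of_colour (u : V) (c : option 'I_k) : V :=
  match u, c with
  | _, None => None
  | None, Some m => mid m
  | mid i, Some m => if m == i then u else leaf i m
  | leaf i j, Some m => if m == j then u else if m == i then mid i else leaf i m
  end.

Lemma dist_set_colour_class u c : dist_set e u (colour_class c) = colour_dist u c.
Proof.
apply: tree_dist_setE.
- by case: u => [[i [j|]]|]; case: c => [m|] //=; tree_cases.
- exists (nearest_of_colour u c); rewrite ?inE;
    by case: u => [[i [j|]]|]; case: c => [m|] //=; tree_cases.
- move=> w; rewrite inE.
  by case: u => [[i [j|]]|]; case: c => [m|] //=; case: w => [[a [b|]]|] //=;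
    tree_cases.
Qed.

Lemma colour_dist_inj u v : (forall c, colour_dist u c = colour_dist v c) -> u = v.
Proof.
case: u => [[i [j|]]|]; case: v => [[i' [j'|]]|] => same;
  move: (same None) => /=; try done;
  try move: (same (Some i)); try move: (same (Some i'));
  try move: (same (Some j)); try move: (same (Some j'));
  rewrite /=; tree_cases.
Qed.

Lemma colouring_locating : locating e colouring.
Proof.
rewrite /locating colouring_partition; apply/forallP => u; apply/forallP => v.
apply/implyP => uv; have [c ne] : exists c, colour_dist u c != colour_dist v c.
  apply/existsP; apply: contraR uv => /existsPn same; apply/eqP/colour_dist_inj => c.
  exact/eqP/negPn/same.
by apply/existsP; exists (colour_class c); rewrite imset_f //= !dist_set_colour_class.
Qed.

Lemma dist_set_sibling_leaves i j j' (S : {set V}) :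
  leaf i j \notin S -> leaf i j' \notin S ->
  dist_set e (leaf i j) S = dist_set e (leaf i j') S.
Proof.
move=> jS j'S; apply: eq_dist_set => w wS; rewrite !distE.
have /eqP ne : w != leaf i j by apply: contraNneq jS => <-.
have /eqP ne' : w != leaf i j' by apply: contraNneq j'S => <-.
by case: w {wS} ne ne' => [[a [b|]]|] //=; tree_cases.
Qed.

Lemma dist_set_leaf_two i j (S : {set V}) : (exists j', leaf i j' \in S) ->
  mid i \notin S -> leaf i j \notin S -> dist_set e (leaf i j) S = 2.
Proof.
move=> [j' j'S] iS jS; apply: tree_dist_setE => //.
  by exists (leaf i j') => //=; rewrite eqxx; case: eqP.
move=> w wS; have /eqP ne : w != leaf i j by apply: contraNneq jS => <-.
have /eqP ne' : w != mid i by apply: contraNneq iS => <-.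
by case: w {wS} ne ne' => [[a [b|]]|] //=; tree_cases.
Qed.

Lemma leaf_pblock_inj P i : locating e P -> injective (fun j => pblock P (leaf i j)).
Proof.
move=> locP j j' same; apply/eqP/negPn/negP => ne.
suff : pblock P (leaf i j) != pblock P (leaf i j') by rewrite same eqxx.
apply: (locating_pblock_neq locP) => [|S SP neS]; first by tree_cases.
have outS w : w \in pblock P (leaf i j) -> w \notin S :=
  notin_pblock_locating locP SP neS.
apply: dist_set_sibling_leaves; apply: outS; first exact: mem_pblock_locating locP _.
by rewrite same; exact: mem_pblock_locating locP _.
Qed.

Lemma leaf_saturated_not_locating (P : {set {set V}}) :
  (forall i S, S \in P -> exists j, leaf i j \in S) -> ~~ locating e P.
Proof.
move=> sat; apply/negP => locP.
have blockP u : pblock P u \in P := pblock_locating locP u.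
pose i0 : 'I_k := Ordinal (ltnW hk).
have card_le : #|P| <= k.
  have sub : P \subset [set pblock P (leaf i0 j) | j : 'I_k].
    apply/subsetP => S SP; have [j jS] := sat i0 S SP.
    by apply/imsetP; exists j; rewrite // (pblock_locating_eq locP SP jS).
  apply: leq_trans (subset_leq_card sub) _.
  by apply: leq_trans (leq_imset_card _ _) _; rewrite card_ord.
(* If x_i and x_i' share a block B, then leaves of branches i and i' in B are
   both at distance 2 from every other block. *)
have mid_inj : injective (fun i => pblock P (mid i)).
  move=> i i' same; apply/eqP/negPn/negP => ne; pose B := pblock P (mid i).
  have [j jB] := sat i B (blockP _); have [j' j'B] := sat i' B (blockP _).
  suff : pblock P (leaf i j) != pblock P (leaf i' j').
    by rewrite !(pblock_locating_eq locP (blockP (mid i))) ?eqxx.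
  apply: (locating_pblock_neq locP) => [|S SP].
    by apply: contra ne => /eqP [-> _].
  rewrite (pblock_locating_eq locP (blockP (mid i)) jB) => neS.
  have outS w : w \in B -> w \notin S := notin_pblock_locating locP SP neS.
  rewrite !dist_set_leaf_two //; try exact: sat; apply: outS => //.
    by rewrite /B same (mem_pblock_locating locP).
  exact: mem_pblock_locating locP _.
have onto_mid S : S \in P -> exists i, S = pblock P (mid i).
  exact: ord_inj_onto mid_inj (fun i => blockP (mid i)) card_le S.
have [i root_i] := onto_mid _ (blockP None).
suff : pblock P None != pblock P (mid i) by rewrite root_i eqxx.
apply: (locating_pblock_neq locP) => // S SP neS.
have outS w : w \in pblock P None -> w \notin S := notin_pblock_locating locP SP neS.
have [m defS] := onto_mid S SP.
have mS : mid m \in S by rewrite defS (mem_pblock_locating locP).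
have [j jS] := sat i S SP.
rewrite (tree_dist_set_one _ mS) ?outS ?(mem_pblock_locating locP) //.
rewrite (tree_dist_set_one _ jS) ?outS ?root_i ?(mem_pblock_locating locP) //=.
by rewrite eqxx.
Qed.

Lemma locating_card_gt (P : {set {set V}}) : locating e P -> k < #|P|.
Proof.
move=> locP; rewrite ltnNge; apply/negP => card_le.
suff sat : forall i S, S \in P -> exists j, leaf i j \in S.
  by move/negP: (leaf_saturated_not_locating sat).
move=> i S SP.
have [j ->] := ord_inj_onto (leaf_pblock_inj (i := i) locP)
  (fun j => pblock_locating locP _) card_le SP.
by exists j; exact: mem_pblock_locating locP _.
Qed.

End AtLeastTwoBranches.
End CompleteTree.

Theorem proposition6 (k : nat) (hk : 2 <= k) :
  twin_number (@tk2_adj k) = k /\ partition_dim (@tk2_adj k) = k.+1.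
Proof.
split.
  apply: twin_number_eq => [u|].
    exact: leq_trans (subset_leq_card (twin_class_sub hk u)) (card_siblings hk u).
  pose i0 : 'I_k := Ordinal (ltnW hk).
  by exists (Some (i0, Some i0)); rewrite twin_class_leaf ?card_siblings_leaf.
rewrite -(card_colouring k); apply: partition_dim_eq (colouring_locating hk) _ => P locP.
by rewrite card_colouring; exact (locating_card_gt hk locP).
Qed.
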